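(* Let $p$ be an odd prime, $\sigma>0$ a real number, and $L\in\mathbb{F}_p^{d\times c}$ a matrix with pairwise distinct columns. Then there exists a $\sigma$-admissible matrix $S\in\mathbb{F}_p^{d\times c'}$ obtained from $L$ by deleting some columns (possibly the empty matrix, with $c'=0$) such that \[ c'\geq \frac{1}{\log_2 p}\left(\log_2 c-\sigma-(\sigma+d)\,H\!\left(\frac{\sigma}{\sigma+d}\right)\right)-1 . \]
   Context: For $x,\xi\in\mathbb{F}_p^{m}$, $\langle x,\xi\rangle$ denotes the integer representative in $(-p/2,p/2]$ of $\sum_t x_t\xi_t\in\mathbb{F}_p$. A matrix $S\in\mathbb{F}_p^{d\times m}$ with rows $r_1,\dots,r_d$ is called $\sigma$-admissible if $\sum_{i=1}^d\langle r_i,\xi\rangle^2>\sigma$ for every nonzero $\xi\in\mathbb{F}_p^m$. $H(q)=-q\log_2 q-(1-q)\log_2(1-q)$ is the binary entropy function. *)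

From HB Require Import structures.
From mathcomp Require Import all_boot all_order all_algebra.
From mathcomp Require Import all_classical all_reals all_analysis.
Set Implicit Arguments. Unset Strict Implicit. Unset Printing Implicit Defensive.
Import Order.TTheory GRing.Theory Num.Theory.
Local Open Scope ring_scope.

(* Centered integer representative in (-p/2, p/2] of an element of F_p
   (p odd): the residue n in [0,p) is kept if 2n <= p, otherwise n - p. *)
Definition crep (p : nat) (a : 'F_p) : int :=
  let n := nat_of_ord a in
  if (2 * n <= p)%N then n%:Z else n%:Z - p%:Z.

Definition cip (p m : nat) (x xi : 'rV['F_p]_m) : int :=
  crep (\sum_(t < m) x 0 t * xi 0 t).

Definition admissible (R : realType) (p d m : nat) (sigma : R)
    (S : 'M['F_p]_(d, m)) : Prop :=
  forall xi : 'rV['F_p]_m, xi != 0 ->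
    sigma < ((\sum_(i < d) (cip (row i S) xi) ^+ 2)%:~R : R).

Definition log2 (R : realType) (x : R) : R := ln x / ln 2.

Definition Hbin (R : realType) (q : R) : R :=
  - q * log2 q - (1 - q) * log2 (1 - q).

From HB Require Import structures.
From mathcomp Require Import all_boot all_order all_algebra.
From mathcomp Require Import reals exp.
From mathcomp Require Import zify ring lra.
Import Order.TTheory GRing.Theory Num.Theory.
Set Implicit Arguments. Unset Strict Implicit. Unset Printing Implicit Defensive.
Local Open Scope ring_scope.

(* Call a set A of columns of L good when L maps no nonzero vector supported
   on A into the ball B = {b | sum_i crep(b_i)^2 <= sigma}.  If A is a good set
   of maximal size, every column outside A has the form a (b - L v) with
   a in F_p, v supported on A and b in B (otherwise it could be added to A),
   so distinct columns give c <= p^(|A|+1) |B|.  Rankin's trick bounds the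
   ball: for 0 < y < 1,
     |B| y^sigma <= (sum_a y^|crep a|)^d <= ((1 + y) / (1 - y))^d,
   and y = sigma / (2 (sigma + d)) yields
     log2 |B| <= sigma + (sigma + d) H(sigma / (sigma + d)).
   The columns of A, in increasing order, form the admissible submatrix. *)

Section AvoidingSets.
Variables (F : finFieldType) (d c : nat) (L : 'M[F]_(d, c)).

(* Vectors take values in the regular module [F^o], so that they form an
   [F]-vector space and [mulmxv] below is a linear map. *)
Local Notation vec n := {ffun 'I_n -> F^o}.

Definition mulmxv (v : vec c) : vec d :=
  [ffun i => \sum_j L i j * v j].

Fact mulmxv_is_linear : linear mulmxv.
Proof.
move=> a v w; apply/ffunP => i; rewrite !ffunE scaler_sumr -big_split /=.
by apply: eq_bigr => j _; rewrite !ffunE mulrDr scalerAr.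
Qed.

HB.instance Definition _ :=
  GRing.isLinear.Build F (vec c) (vec d) _ mulmxv mulmxv_is_linear.

Definition colv (j : 'I_c) : vec d := [ffun i => L i j].

Definition unitv (j : 'I_c) : vec c := [ffun t => (t == j)%:R].

Lemma mulmxv_unitv j : mulmxv (unitv j) = colv j.
Proof.
apply/ffunP => i; rewrite !ffunE (bigD1 j) //= ffunE eqxx mulr1 big1 ?addr0 //.
by move=> t /negbTE tj; rewrite ffunE tj mulr0.
Qed.

Lemma colv_inj : injective (fun j => col j L) -> injective colv.
Proof.
move=> col_inj j k /ffunP eq_jk; apply: col_inj; apply/matrixP => i l.
by have := eq_jk i; rewrite !ffunE !mxE.
Qed.

Definition supported (A : {set 'I_c}) := [set v : vec c | support v \subset A].

Lemma card_supported A : #|supported A| = (#|F| ^ #|A|)%N.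
Proof.
rewrite -(card_pffun_on 0 A predT); apply: eq_card => v.
by rewrite inE; apply/idP/pffun_onP => [|[]//]; split.
Qed.

Section Spread.
Variables (n : nat) (f : 'I_n -> 'I_c).

Definition spread (w : 'rV[F]_n) : vec c :=
  [ffun j => \sum_(t | f t == j) w 0 t].

Lemma spread_supported (A : {set 'I_c}) w :
  (forall t, f t \in A) -> spread w \in supported A.
Proof.
move=> fA; rewrite inE; apply/supportP => j jA; rewrite ffunE big_pred0 // => t.
by apply: contraNF jA => /eqP <-.
Qed.

Lemma spread_inj_eq0 w : injective f -> (spread w == 0) = (w == 0).
Proof.
move=> f_inj; apply/eqP/eqP => [/ffunP w0|->]; last first.
  by apply/ffunP => j; rewrite !ffunE big1 // => t _; rewrite mxE.
apply/rowP => t; have := w0 (f t); rewrite !ffunE mxE => <-.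
by rewrite (big_pred1 t) // => s; rewrite inj_eq.
Qed.

Lemma mulmxv_spread w i : mulmxv (spread w) i = \sum_t colsub f L i t * w 0 t.
Proof.
rewrite ffunE (partition_big f predT) //=; apply: eq_bigr => j _.
by rewrite ffunE mulr_sumr; apply: eq_bigr => t /eqP ft; rewrite mxE ft.
Qed.

End Spread.

Variable ball : {set vec d}.

Definition avoids (A : {set 'I_c}) :=
  [forall v in supported A, (v != 0) ==> (mulmxv v \notin ball)].

Definition blocked (A : {set 'I_c}) :=
  [set a *: (vb.2 - mulmxv vb.1)
     | a : F in [set: F], vb : vec c * vec d in setX (supported A) ball].

Lemma avoids0 : avoids set0.
Proof.
apply/forall_inP => v; rewrite inE => /supportP v0.
suff -> : v = 0 by rewrite eqxx.
by apply/ffunP => j; rewrite v0 ?inE ?ffunE.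
Qed.

Lemma card_blocked A : (#|blocked A| <= #|F| ^ #|A|.+1 * #|ball|)%N.
Proof.
rewrite /blocked curry_imset2X; apply: leq_trans (leq_imset_card _ _) _.
by rewrite !cardsX cardsT card_supported mulnA -expnS.
Qed.

Lemma avoidsU1 A j : avoids A -> colv j \notin blocked A -> avoids (j |: A).
Proof.
move=> /forall_inP avA colj; apply/forall_inP => v; rewrite inE => /supportP v_supp.
apply/implyP => v_neq0; apply/negP => v_ball.
(* If [v j != 0], then [L v = L w + v j * col j] puts column [j] in [blocked A]. *)
pose w := v - v j *: unitv j.
have w_supp : w \in supported A.
  rewrite inE; apply/supportP => t tA; rewrite !ffunE -[v j *: _]/(v j * _).
  have [-> | tj] := eqVneq t j; first by rewrite mulr1 subrr.
  by rewrite mulr0 subr0 v_supp // !inE negb_or tj.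
have mul_w : mulmxv w = mulmxv v - v j *: colv j.
  by rewrite linearB linearZ /= mulmxv_unitv.
have [vj0 | vj_neq0] := eqVneq (v j) 0.
  have w_eq : w = v by rewrite /w vj0 scale0r subr0.
  by have := avA w w_supp; rewrite w_eq v_neq0 v_ball.
move/negP: colj; apply; apply/imset2P; exists (v j)^-1 (w, mulmxv v) => //.
  by rewrite in_setX w_supp.
by rewrite /= mul_w opprB addrC subrK scalerA mulVf // scale1r.
Qed.

Hypothesis ball0 : 0 \in ball.

Lemma notin_blocked A j : colv j \notin blocked A -> j \notin A.
Proof.
apply: contra => jA; apply/imset2P; exists (-1) (unitv j, 0 : vec d) => //.
  rewrite in_setX ball0 andbT inE; apply/supportP => t tA; rewrite ffunE.
  by case: eqP tA => // ->; rewrite jA.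
by rewrite /= mulmxv_unitv sub0r scaleN1r opprK.
Qed.

Lemma exists_avoiding_set :
  injective colv -> exists2 A, avoids A & (c <= #|F| ^ #|A|.+1 * #|ball|)%N.
Proof.
move=> colv_inj.
case: (arg_maxnP (fun A : {set 'I_c} => #|A|) avoids0) => A avA maxA.
exists A => //; rewrite leqNgt; apply/negP => blocked_small.
have : ~~ (colv @: setT \subset blocked A).
  apply/negP => /subset_leq_card; rewrite card_imset // cardsT card_ord.
  by rewrite leqNgt (leq_ltn_trans (card_blocked A)).
case/subsetPn => _ /imsetP [j _ ->] colj.
have := maxA _ (avoidsU1 avA colj).
by rewrite cardsU1 (notin_blocked colj) /geq /= ltnn.
Qed.

End AvoidingSets.

Lemma sum_expr_le (R : realFieldType) (y : R) n :
  0 <= y < 1 -> \sum_(i < n) y ^+ i <= (1 - y)^-1.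
Proof.
move=> /andP[y_ge0 y_lt1]; rewrite -div1r ler_pdivlMr ?subr_gt0 //.
by have := subrX1 y n; have := exprn_ge0 n y_ge0; nra.
Qed.

Lemma mulr_Hbin (R : realType) (s t : R) : s + t != 0 ->
  (s + t) * Hbin (s / (s + t)) = - (s * log2 (s / (s + t))) - t * log2 (t / (s + t)).
Proof.
move=> st_neq0; rewrite /Hbin.
have -> : 1 - s / (s + t) = t / (s + t) by field.
by field.
Qed.

Lemma log2_natr_le_mul (R : realType) (c m k : nat) :
  (0 < m)%N -> (0 < k)%N -> (c <= m * k)%N ->
  log2 (c%:R : R) <= log2 m%:R + log2 k%:R.
Proof.
move=> m_gt0 k_gt0 c_le; rewrite /log2 -mulrDl ler_wpM2r ?invr_ge0 ?ln_ge0 ?ler1n //.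
have [->|c_gt0] := posnP c; first by rewrite ln0 // addr_ge0 // ln_ge0 // ler1n.
by rewrite -lnM ?posrE ?ltr0n // ler_ln ?posrE ?mulr_gt0 ?ltr0n // -natrM ler_nat.
Qed.

Lemma normz_le_sqr (z : int) : `|z| <= z ^+ 2.
Proof. nia. Qed.

Section SquaredNormBall.
Variables (R : realType) (p d : nat) (sigma : R).
Hypothesis p_pr : prime p.

Definition sqnorm (b : {ffun 'I_d -> ('F_p)^o}) : int := \sum_i crep (b i) ^+ 2.

Definition sqnorm_ball : {set {ffun 'I_d -> ('F_p)^o}} :=
  [set b | (sqnorm b)%:~R <= sigma].

Lemma sqnorm_ball0 : 0 <= sigma -> 0 \in sqnorm_ball.
Proof. by rewrite inE /sqnorm big1 // => i _; rewrite ffunE. Qed.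

Lemma admissible_colsub c (L : 'M['F_p]_(d, c)) A n (f : 'I_n -> 'I_c) :
  avoids L sqnorm_ball A -> injective f -> (forall t, f t \in A) ->
  admissible sigma (colsub f L).
Proof.
move=> /forall_inP avA f_inj fA xi xi_neq0.
have := avA _ (spread_supported xi fA); rewrite spread_inj_eq0 // xi_neq0 inE -ltNge.
congr (_ < _%:~R); apply: eq_bigr => i _; rewrite mulmxv_spread /cip.
by under [in RHS]eq_bigr do rewrite mxE.
Qed.

Lemma val_Fp_lt (a : 'F_p) : (val a < p)%N.
Proof. by apply: leq_trans (ltn_ord a) _; rewrite Fp_cast. Qed.

Lemma sum_Fp (F : nat -> R) : \sum_(a : 'F_p) F a = \sum_(0 <= a < p) F a.
Proof. by rewrite -[in RHS](Fp_cast p_pr) big_mkord. Qed.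

Lemma card_ball_mul_powR_le (y : R) : 0 < y <= 1 ->
  #|sqnorm_ball|%:R * y `^ sigma <= (\sum_(a : 'F_p) y ^+ `|crep a|%N) ^+ d.
Proof.
move=> y01; have /andP[y_gt0 _] := y01.
rewrite -[d in X in _ <= X]card_ord -prodr_const bigA_distr_bigA /= mulr_natl -sumr_const.
apply: (@le_trans _ _ (\sum_(b in sqnorm_ball) \prod_i y ^+ `|crep (b i)|%N)).
  apply: ler_sum => b; rewrite inE => b_ball.
  rewrite prodrXr -powR_mulrn; last exact: ltW.
  apply: ger_powR => //.
  apply: le_trans b_ball; rewrite /sqnorm natr_sum rmorph_sum /=; apply: ler_sum => i _.
  by rewrite natr_absz ler_int normz_le_sqr.
rewrite [X in _ <= X](bigID (mem sqnorm_ball)) /= lerDl.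
by apply: sumr_ge0 => b _; apply: prodr_ge0 => i _; rewrite exprn_ge0 // ltW.
Qed.

Lemma abs_crep (a : 'F_p) :
  `|crep a|%N = if (2 * a <= p)%N then nat_of_ord a else (p - a)%N.
Proof. by rewrite /crep; case: ifP => // _; rewrite distnEr // ltnW // val_Fp_lt. Qed.

Lemma sum_Fp_pow_crep_le (y : R) : 0 <= y < 1 ->
  \sum_(a : 'F_p) y ^+ `|crep a|%N <= (1 + y) / (1 - y).
Proof.
move=> /andP[y_ge0 y_lt1].
apply: (@le_trans _ _ (\sum_(a : 'F_p) (y ^+ a + y ^+ (p - a)))).
  apply: ler_sum => a _; rewrite abs_crep.
  by case: ifP => _; rewrite ?lerDl ?lerDr exprn_ge0.
rewrite (sum_Fp (fun a => y ^+ a + y ^+ (p - a))) big_split /=.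
rewrite [X in _ + X]big_nat_rev /= add0n.
rewrite [X in _ + X](eq_big_nat _ _ (F2 := fun a => y * y ^+ a)); last first.
  by move=> a /andP[_ a_lt_p]; rewrite subKn // exprS.
rewrite -mulr_sumr big_mkord.
have /(sum_expr_le p) geom_le : 0 <= y < 1 by rewrite y_ge0.
by rewrite mulrDl mul1r lerD // ler_wpM2l.
Qed.

Lemma card_ball_gt0 : 0 <= sigma -> (0 < #|sqnorm_ball|)%N.
Proof.
by move=> sigma_ge0; rewrite card_gt0; apply/set0Pn; exists 0; exact: sqnorm_ball0.
Qed.

Lemma ln_card_ball_le (y : R) : 0 <= sigma -> 0 < y < 1 ->
  ln #|sqnorm_ball|%:R <= d%:R * ln ((1 + y) / (1 - y)) - sigma * ln y.
Proof.
move=> sigma_ge0 /andP[y_gt0 y_lt1]; have ball_gt0 := card_ball_gt0 sigma_ge0.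
have Q_gt0 : 0 < (1 + y) / (1 - y) by rewrite divr_gt0 ?subr_gt0 ?addr_gt0.
set Q := (1 + y) / (1 - y) in Q_gt0 *.
rewrite lerBrDr -ln_powR -lnM ?posrE ?ltr0n ?powR_gt0 //.
rewrite [d%:R * _]mulr_natl -lnXn // ler_ln ?posrE ?exprn_gt0 //; last first.
  by rewrite mulr_gt0 ?ltr0n ?powR_gt0.
apply: le_trans (card_ball_mul_powR_le _) _; first by rewrite y_gt0 ltW.
apply: lerXn2r; rewrite ?nnegrE.
- by apply: sumr_ge0 => a _; rewrite exprn_ge0 // ltW.
- exact: ltW.
- by apply: sum_Fp_pow_crep_le; rewrite y_lt1 ltW.
Qed.

Lemma log2_card_ball_le : 0 < sigma ->
  log2 #|sqnorm_ball|%:R <= sigma + (sigma + d%:R) * Hbin (sigma / (sigma + d%:R)).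
Proof.
move=> sigma_gt0; have d_ge0 := ler0n R d.
have s_gt0 : 0 < sigma + d%:R by lra.
rewrite mulr_Hbin ?gt_eqF //.
set s := sigma + d%:R in s_gt0 *; set q := sigma / s.
have q_gt0 : 0 < q by rewrite divr_gt0.
(* This choice makes [(1 + y) / (1 - y) <= 1 / (1 - q)]. *)
pose y := q / 2.
have ys : y * s = sigma / 2 by rewrite /y /q; field; rewrite gt_eqF.
have y_gt0 : 0 < y by rewrite divr_gt0.
have y_lt1 : y < 1.
  by rewrite -(ltr_pM2r s_gt0) ys mul1r ltr_pdivrMr // /s; lra.
have ln_K := ln_card_ball_le (ltW sigma_gt0) (introT andP (conj y_gt0 y_lt1)).
have ln_y : ln y = ln q - ln 2 by rewrite ln_div ?posrE.
have ln_Q : d%:R * ln ((1 + y) / (1 - y)) <= - (d%:R * ln (d%:R / s)).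
  have [->|d_gt0] := posnP d; first by rewrite mulr0n !mul0r oppr0.
  rewrite -(ltr0n R) in d_gt0.
  rewrite -[leRHS]mulrN -lnV ?posrE ?divr_gt0 // invf_div ler_wpM2l //.
  rewrite ler_ln ?posrE ?divr_gt0 ?subr_gt0 ?addr_gt0 //.
  rewrite ler_pdivrMr ?subr_gt0 // mulrAC ler_pdivlMr //.
  by rewrite /s in ys *; nra.
have ln2_gt0 : 0 < ln (2 : R) by rewrite ln_gt0 ?ltr1n.
rewrite /log2 ler_pdivrMr //.
have -> : (sigma + (- (sigma * (ln q / ln 2)) - d%:R * (ln (d%:R / s) / ln 2))) * ln 2 =
    sigma * ln 2 - sigma * ln q - d%:R * ln (d%:R / s) by field; rewrite gt_eqF.
by rewrite ln_y in ln_K; lra.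
Qed.

End SquaredNormBall.

Lemma ltn_enum_val (c : nat) (A : {set 'I_c}) (i j : 'I_#|A|) :
  (i < j)%N -> (@Order.enum_val _ _ (mem A) i < @Order.enum_val _ _ (mem A) j)%N.
Proof.
have := leW_mono (Order.le_enum_val (@le_total _ 'I_c) (A := mem A)) i j.
by rewrite !ltEord => ->.
Qed.

Theorem lemma4p3 (R : realType) (p d c : nat) (sigma : R)
    (L : 'M['F_p]_(d, c)) :
  prime p -> odd p -> 0 < sigma ->
  (forall j k : 'I_c, col j L = col k L -> j = k) ->
  exists (c' : nat) (f : 'I_c' -> 'I_c),
    (forall i j : 'I_c', (i < j)%N -> (f i < f j)%N) /\
    admissible sigma (colsub f L) /\
    (log2 (c%:R : R) - sigma
       - (sigma + d%:R) * Hbin (sigma / (sigma + d%:R))) / log2 (p%:R : R) - 1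
      <= (c'%:R : R).
Proof.
move=> p_pr _ sigma_gt0 col_inj.
have [A avA c_le] :=
  exists_avoiding_set (sqnorm_ball0 p d (ltW sigma_gt0)) (colv_inj col_inj).
exists #|A|, (fun i => Order.enum_val i); split; first exact: ltn_enum_val.
split.
  by apply: (admissible_colsub avA); [exact: Order.enum_val_inj | exact: Order.enum_valP].
have p_pow_gt0 : (0 < p ^ #|A|.+1)%N by rewrite expn_gt0 prime_gt0.
rewrite card_Fp // in c_le.
have log2_pX : log2 (p ^ #|A|.+1)%:R = (#|A|%:R + 1) * log2 (p%:R : R).
  by rewrite natrX /log2 lnXn ?ltr0n ?prime_gt0 // natr1 mulr_natl mulrnAl.
have := log2_natr_le_mul R p_pow_gt0 (card_ball_gt0 p d (ltW sigma_gt0)) c_le.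
rewrite log2_pX => log2_c_le.
have log2_ball_le := log2_card_ball_le d p_pr sigma_gt0.
have log2_p_gt0 : 0 < log2 (p%:R : R) by rewrite /log2 divr_gt0 ?ln_gt0 ?ltr1n ?prime_gt1.
by rewrite lerBlDr ler_pdivrMr //; lra.
Qed.
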